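(* Let $N,k$ be positive integers, $p_1,\dots,p_N$ primes with all $p_i>3$, and $s_1,\dots,s_N$ positive integers. Then the group $\mathbb{Z}_{p_1^{s_1}\cdots p_N^{s_N}}\mathbin{\mathrm{wr}}\mathbb{Z}^k$ admits an automorphism with finite Reidemeister number.
   Context: $\mathbb{Z}_q\mathbin{\mathrm{wr}}\mathbb{Z}^k=\bigoplus_{x\in\mathbb{Z}^k}(\mathbb{Z}_q)_x\rtimes\mathbb{Z}^k$ is the restricted wreath product with $\mathbb{Z}^k$ acting by shifting indices. The Reidemeister number $R(\varphi)$ of an automorphism $\varphi$ of a group $G$ is the number of equivalence classes of the relation $g_1\sim hg_2\varphi(h^{-1})$, $h\in G$. *)

(* The restricted wreath product Z_q wr Z^k is modelled as the
   set of pairs (f, a) with f : Z^k -> Z_q finitely supported and a in Z^k,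
   inside the ambient type (Z^k -> Z_q) * Z^k, with the semidirect-product law
   (f, a) * (g, b) = (f + a.g, a + b), where (a.g)(x) = g(x - a) (shift). *)
From HB Require Import structures.
From mathcomp Require Import all_boot all_order all_algebra.
Set Implicit Arguments. Unset Strict Implicit. Unset Printing Implicit Defensive.
Import GRing.Theory.
Local Open Scope ring_scope.

Definition zvec (k : nat) := 'rV[int]_k.

Definition wr_elt (q k : nat) := ((zvec k -> 'Z_q) * zvec k)%type.

Definition fin_supp (q k : nat) (f : zvec k -> 'Z_q) : Prop :=
  exists s : seq (zvec k), forall x, x \notin s -> f x = 0.

Definition in_wr (q k : nat) (g : wr_elt q k) : Prop := fin_supp g.1.

Definition shift (q k : nat) (a : zvec k) (f : zvec k -> 'Z_q) : zvec k -> 'Z_q :=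
  fun x => f (x - a).

Definition wr_one (q k : nat) : wr_elt q k := (fun _ => 0, 0).

Definition wr_mul (q k : nat) (g h : wr_elt q k) : wr_elt q k :=
  (fun x => g.1 x + shift g.2 h.1 x, g.2 + h.2).

Definition wr_inv (q k : nat) (g : wr_elt q k) : wr_elt q k :=
  (fun x => - shift (- g.2) g.1 x, - g.2).

Definition is_wr_aut (q k : nat) (phi : wr_elt q k -> wr_elt q k) : Prop :=
  [/\ (forall g, in_wr g -> in_wr (phi g)),
      (forall g h, in_wr g -> in_wr h -> phi (wr_mul g h) = wr_mul (phi g) (phi h)),
      (forall g h, in_wr g -> in_wr h -> phi g = phi h -> g = h)
    & (forall h, in_wr h -> exists2 g, in_wr g & phi g = h)].

Definition twisted_conj (q k : nat) (phi : wr_elt q k -> wr_elt q k)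
  (g1 g2 : wr_elt q k) : Prop :=
  exists2 h, in_wr h & g1 = wr_mul (wr_mul h g2) (phi (wr_inv h)).

Definition finite_reidemeister (q k : nat) (phi : wr_elt q k -> wr_elt q k) : Prop :=
  exists (n : nat) (r : 'I_n -> wr_elt q k),
    (forall i, in_wr (r i)) /\
    (forall g, in_wr g -> exists i, twisted_conj phi g (r i)).

From mathcomp Require Import all_boot all_order all_algebra.
From mathcomp Require Import zify ring.
From Stdlib Require Import FunctionalExtensionality.
Set Implicit Arguments. Unset Strict Implicit. Unset Printing Implicit Defensive.
Import GRing.Theory.

(* For a unit c of Z_q, phi(f, a) = (c f(-.), -a) is an automorphism of
   Z_q wr Z^k.  Write a = 2b + e with e in {0,1}^k; for h = (u, b) the element
   h (0, e) phi(h^-1) is (u - c u(a - .), a).  Since x |-> a - x is an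
   involution S, (1 - cS)(1 + cS) = 1 - c^2, so when 1 - c^2 is a unit every
   f is of the form u - c u(a - .) and R(phi) <= 2^k.  For q prime to 6, take
   c = 2: then 1 - c^2 = -3 is a unit. *)

Lemma prodn_gt1 (I : finType) (F : I -> nat) (i0 : I) :
  (forall i, 0 < F i)%N -> (1 < F i0)%N -> (1 < \prod_i F i)%N.
Proof.
move=> F_gt0 Fi0_gt1; rewrite (bigD1 i0) //=.
exact/(leq_trans Fi0_gt1)/leq_pmulr/prodn_gt0.
Qed.

Lemma coprime_prod_large_primes (I : finType) (p s : I -> nat) (m : nat) :
  prime m -> (forall i, prime (p i)) -> (forall i, m < p i)%N ->
  coprime (\prod_i p i ^ s i) m.
Proof.
move=> m_pr p_prime m_lt; rewrite coprime_sym.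
apply: (big_ind (coprime m)) => [|x y|i _]; first exact: coprimen1.
  by rewrite coprimeMr => -> ->.
by rewrite coprimeXr // prime_coprime // dvdn_prime2 // neq_ltn m_lt.
Qed.

Local Open Scope ring_scope.

Section FiniteSupport.
Variables (q k : nat).
Implicit Types (f g : zvec k -> 'Z_q).

Lemma fin_supp_comp f (h h' : zvec k -> zvec k) :
  cancel h h' -> fin_supp f -> fin_supp (f \o h).
Proof.
move=> hK [s fs]; exists (map h' s) => x xNs /=; apply: fs.
by apply: contra xNs => hxs; apply/mapP; exists (h x); rewrite ?hK.
Qed.

Lemma fin_supp_add f g : fin_supp f -> fin_supp g -> fin_supp (fun x => f x + g x).
Proof.
move=> [s fs] [t gt]; exists (s ++ t) => x.
by rewrite mem_cat negb_or => /andP[xNs xNt]; rewrite fs // gt // addr0.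
Qed.

Lemma fin_supp_scale (c : 'Z_q) f : fin_supp f -> fin_supp (fun x => c * f x).
Proof. by move=> [s fs]; exists s => x xNs; rewrite fs ?mulr0. Qed.

End FiniteSupport.

Lemma finite_reidemeister_fin (q k : nat) (phi : wr_elt q k -> wr_elt q k)
    (T : finType) (r : T -> wr_elt q k) :
  (forall t, in_wr (r t)) ->
  (forall g, in_wr g -> exists t, twisted_conj phi g (r t)) ->
  finite_reidemeister phi.
Proof.
move=> rW rP; exists #|T|, (r \o enum_val); split=> [i|g gW]; first exact: rW.
by have [t gt] := rP g gW; exists (enum_rank t); rewrite /= enum_rankK.
Qed.

Definition bits_vec (k : nat) (t : {ffun 'I_k -> bool}) : zvec k := \row_j (t j)%:Z.

Lemma zvec_halve (k : nat) (a : zvec k) : exists b t, a = b + bits_vec t + b.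
Proof.
exists (\row_j (a ord0 j %/ 2)%Z), [ffun j => (a ord0 j %% 2)%Z != 0].
apply/rowP => j; rewrite !mxE ffunE {1}(divz_eq (a ord0 j) 2).
have := @modz_ge0 (a ord0 j) 2 isT; have := @ltz_pmod (a ord0 j) 2 isT.
move: (a ord0 j %/ 2)%Z (a ord0 j %% 2)%Z => m n n_lt2 n_ge0.
have [->|->] : n = 0 \/ n = 1 by lia.
all: lia.
Qed.

Section ReflectScale.
Variables (q k : nat) (c : 'Z_q).

Definition reflect_scale (g : wr_elt q k) : wr_elt q k := (fun x => c * g.1 (- x), - g.2).

Lemma reflect_scale_mul g h :
  reflect_scale (wr_mul g h) = wr_mul (reflect_scale g) (reflect_scale h).
Proof.
rewrite /reflect_scale /wr_mul /shift /=; congr (_, _); last by rewrite opprD.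
by apply: functional_extensionality => x; rewrite mulrDr opprD opprK.
Qed.

Lemma in_wr_reflect_scale (d : 'Z_q) f (a : zvec k) :
  fin_supp f -> in_wr ((fun x => d * f (- x)), a).
Proof. by move=> fs; apply/fin_supp_scale/(fin_supp_comp opprK). Qed.

Lemma reflect_scale_aut : c \is a GRing.unit -> is_wr_aut reflect_scale.
Proof.
move=> cU; split=> [[f a] fs|g h _ _|[f a] [g b] _ _ [fg ab]|[f a] fs].
- exact: in_wr_reflect_scale.
- exact: reflect_scale_mul.
- congr (_, _); last exact: oppr_inj.
  apply: functional_extensionality => x.
  by have /= /(mulrI cU) := f_equal (fun F => F (- x)) fg; rewrite opprK.
- exists ((fun x => c^-1 * f (- x)), - a); first exact: in_wr_reflect_scale.
  rewrite /reflect_scale /= opprK; congr (_, _).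
  by apply: functional_extensionality => x; rewrite opprK mulrA mulrV ?mul1r.
Qed.

Lemma twisted_conj_reflect_scale f (a b e : zvec k) :
  (1 - c ^+ 2) \is a GRing.unit -> fin_supp f -> a = b + e + b ->
  twisted_conj reflect_scale (f, a) (fun _ => 0, e).
Proof.
move=> dU fs abe; pose d := (1 - c ^+ 2)^-1.
exists ((fun x => d * (f x + c * f (a - x))), b).
  by apply/fin_supp_scale/fin_supp_add/fin_supp_scale/(fin_supp_comp (subKr a)).
rewrite /wr_mul /wr_inv /reflect_scale /shift /=; congr (_, _); last first.
  by rewrite opprK abe.
apply: functional_extensionality => x.
have -> : - (x - (b + e)) - - b = a - x by rewrite abe opprB opprK addrAC.
rewrite subKr addr0; move: (f x) (f (a - x)) => y z.
have -> : d * (y + c * z) + c * - (d * (z + c * y)) = d * (1 - c ^+ 2) * y by ring.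
by rewrite mulVr ?mul1r.
Qed.

Lemma reflect_scale_finite_reidemeister :
  (1 - c ^+ 2) \is a GRing.unit -> finite_reidemeister reflect_scale.
Proof.
move=> dU; apply: (@finite_reidemeister_fin _ _ _ _ (fun t => (fun _ => 0, bits_vec t))).
  by move=> t; exists [::].
move=> [f a] fs; have [b [t abe]] := zvec_halve a.
by exists t; apply: (twisted_conj_reflect_scale dU fs abe).
Qed.

End ReflectScale.

Theorem proposition4p5 (N k : nat) (p s : 'I_N -> nat) :
  (0 < N)%N -> (0 < k)%N ->
  (forall i, prime (p i) /\ (3 < p i)%N) ->
  (forall i, (0 < s i)%N) ->
  exists phi : wr_elt (\prod_(i < N) p i ^ s i)%N k ->
               wr_elt (\prod_(i < N) p i ^ s i)%N k,
    is_wr_aut phi /\ finite_reidemeister phi.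
Proof.
move=> N_gt0 _ p_large s_gt0; set q := (\prod_(i < N) p i ^ s i)%N.
have p_prime i : prime (p i) := (p_large i).1.
have q_gt1 : (1 < q)%N.
  apply: (@prodn_gt1 _ _ (Ordinal N_gt0)) => [i|]; first by rewrite expn_gt0 prime_gt0.
  by rewrite -[1%N](expn0 (p (Ordinal N_gt0))) ltn_exp2l ?prime_gt1.
have coprime_q m : prime m -> (m <= 3)%N -> coprime q m.
  move=> m_pr m_le3; apply: coprime_prod_large_primes => // i.
  exact: leq_ltn_trans m_le3 (p_large i).2.
have two_unit : (2%:R : 'Z_q) \is a GRing.unit by rewrite unitZpE ?coprime_q.
have three_unit : (3%:R : 'Z_q) \is a GRing.unit by rewrite unitZpE ?coprime_q.
exists (reflect_scale 2%:R); split; first exact: reflect_scale_aut.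
apply: reflect_scale_finite_reidemeister.
have -> : 1 - 2%:R ^+ 2 = - 3%:R :> 'Z_q by ring.
by rewrite unitrN.
Qed.
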